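(* Let $W=W_{\mathrm{aff}}\rtimes\Omega$ be an extended Coxeter group with set of hyperplanes $\mathfrak H$ (notation as in the context). Then for all $w,w'\in W$, \[ \mathbb L(w)\cdot w\big(\mathbb L(w')\big)=\mathbb X(w,w')^2\,\mathbb L(ww') \] in the free commutative monoid $\mathbb N[\mathfrak H]$.
   Context: For a Coxeter group $(W_{\mathrm{aff}},S)$, the set of hyperplanes is $\mathfrak H=\{vsv^{-1}:v\in W_{\mathrm{aff}},s\in S\}$. For $v\in W_{\mathrm{aff}}$ with reduced expression $v=s_1\cdots s_r$, the hyperplanes separating $1$ and $v$ are the $r$ distinct elements $(s_1\cdots s_{i-1})s_i(s_1\cdots s_{i-1})^{-1}$, $1\le i\le r$ (independent of the reduced expression); $H$ separates $v_1,v_2\in W_{\mathrm{aff}}$ iff $v_1^{-1}Hv_1$ separates $1$ and $v_1^{-1}v_2$. An extended Coxeter group is $W=W_{\mathrm{aff}}\rtimes\Omega$ where $(W_{\mathrm{aff}},S)$ is a Coxeter group and $\Omega$'s conjugation action preserves $S$; an element $w=vu$ ($v\in W_{\mathrm{aff}},u\in\Omega$) is identified with the chamber $v$, and a hyperplane separates $w,w'\in W$ if it separates the corresponding chambers. $W$ acts on $\mathfrak H$ by conjugation and hence on the free commutative monoid $\mathbb N[\mathfrak H]$ on symbols $\mathbf a_H$ ($H\in\mathfrak H$). Define $\mathbb L(w)=\prod_H\mathbf a_H$ over all $H\in\mathfrak H$ separating $1$ and $w$, and $\mathbb X(w,w')=\prod_H\mathbf a_H$ over all $H\in\mathfrak H$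 which both separate $1$ from $w$ and separate $w$ from $ww'$. *)

From mathcomp Require Import all_boot.
From mathcomp Require Import boolp.

Set Implicit Arguments.
Unset Strict Implicit.
Unset Printing Implicit Defensive.

Record group := Group {
  gT :> Type;
  gmul : gT -> gT -> gT;
  gone : gT;
  ginv : gT -> gT;
  gmulA : forall x y z, gmul x (gmul y z) = gmul (gmul x y) z;
  gmul1g : forall x, gmul gone x = x;
  gmulg1 : forall x, gmul x gone = x;
  gmulVg : forall x, gmul (ginv x) x = gone;
  gmulgV : forall x, gmul x (ginv x) = gone }.

Arguments gmul {g}.
Arguments gone {g}.
Arguments ginv {g}.

Definition word_in (G : group) (S : G -> Prop) (l : seq G) : Prop :=
  forall i, i < size l -> S (nth gone l i).

Definition gprod (G : group) (l : seq G) : G := foldr gmul gone l.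
Definition gexp (G : group) (x : G) (n : nat) : G := iter n (gmul x) gone.
Definition gconj (G : group) (x y : G) : G := gmul (gmul x y) (ginv x).

Definition is_subgroup (G : group) (P : G -> Prop) : Prop :=
  [/\ P gone, (forall x y, P x -> P y -> P (gmul x y)) & (forall x, P x -> P (ginv x))].

(* (Waff, S) is a Coxeter system, Waff a subgroup of G:
   S consists of involutions of Waff, generates Waff, and Waff has the presentation
   < S | s^2 = 1, (st)^(m_st) = 1 > (m_st = order of st), expressed by the
   universal property of that presentation. *)
Definition coxeter_system (G : group) (Waff S : G -> Prop) : Prop :=
  [/\ is_subgroup Waff,
      (forall s, S s -> Waff s),
      (forall s, S s -> s <> gone /\ gmul s s = gone),
      (forall v, Waff v -> exists l : seq G, word_in S l /\ v = gprod l) &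
      (forall (K : group) (f : G -> K),
         (forall s, S s -> gmul (f s) (f s) = gone) ->
         (forall s t m, S s -> S t -> gexp (gmul s t) m = gone ->
                        gexp (gmul (f s) (f t)) m = gone) ->
         exists phi : G -> K,
           (forall s, S s -> phi s = f s) /\
           (forall x y, Waff x -> Waff y -> phi (gmul x y) = gmul (phi x) (phi y)))].

(* G = Waff ⋊ Omega (internal semidirect product), with (Waff,S) Coxeter and
   conjugation by Omega preserving S. *)
Definition extended_coxeter (G : group) (Waff S Omega : G -> Prop) : Prop :=
  coxeter_system Waff S /\
  [/\ is_subgroup Omega,
      (forall u v, Omega u -> Waff v -> Waff (gconj u v)),
      (forall u s, Omega u -> S s -> S (gconj u s)),
      (forall w, exists v u, [/\ Waff v, Omega u & w = gmul v u]) &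
      (forall x, Waff x -> Omega x -> x = gone)].

Definition reduced_expr (G : group) (S : G -> Prop) (l : seq G) (v : G) : Prop :=
  [/\ word_in S l, gprod l = v &
      forall l' : seq G, word_in S l' -> gprod l' = v -> size l <= size l'].

(* H separates 1 and v (v in Waff) *)
Definition sep1 (G : group) (S : G -> Prop) (v H : G) : Prop :=
  exists l : seq G, reduced_expr S l v /\
    exists2 i, i < size l & H = gconj (gprod (take i l)) (nth gone l i).

Definition sep_aff (G : group) (S : G -> Prop) (v1 v2 H : G) : Prop :=
  sep1 S (gmul (ginv v1) v2) (gconj (ginv v1) H).

(* H separates w1, w2 in W: separates the chambers v1, v2 where wi = vi ui *)
Definition sepW (G : group) (Waff S Omega : G -> Prop) (w1 w2 H : G) : Prop :=
  exists v1 u1 v2 u2,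
    [/\ Waff v1, Omega u1 & w1 = gmul v1 u1] /\
    [/\ Waff v2, Omega u2 & w2 = gmul v2 u2] /\
    sep_aff S v1 v2 H.

(* The free commutative monoid N[hyperplanes], represented by multiplicity
   functions (all elements considered below are finitely supported on hyperplanes). *)
Definition fcm (G : group) := G -> nat.
Definition fcm_mul (G : group) (m1 m2 : fcm G) : fcm G := fun x => m1 x + m2 x.
(* action of w : w(a_H) = a_{w H w^-1} *)
Definition fcm_act (G : group) (w : G) (m : fcm G) : fcm G :=
  fun x => m (gconj (ginv w) x).

Definition Lmon (G : group) (Waff S Omega : G -> Prop) (w : G) : fcm G :=
  fun H => nat_of_bool `[< sepW Waff S Omega gone w H >].

Definition Xmon (G : group) (Waff S Omega : G -> Prop) (w w' : G) : fcm G :=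
  fun H => nat_of_bool `[< sepW Waff S Omega gone w H /\
                          sepW Waff S Omega w (gmul w w') H >].

From mathcomp Require Import all_boot.
From mathcomp Require Import boolp zify.

Set Implicit Arguments.
Unset Strict Implicit.
Unset Printing Implicit Defensive.

(* Write w = v u with v in Waff and u in Omega; a hyperplane H separates 1 and w
   iff it occurs in the reflection sequence of a reduced word for v.  The map
   s |-> (s, [H = s]) into the semidirect product G x| (G -> bool), G acting on the
   second factor by conjugating the argument, respects the Coxeter relations, so it
   extends to a homomorphism on Waff: the parity of the number of occurrences of H
   in the reflection sequence of a word only depends on the element it represents.
   In a reduced word every reflection occurs at most once (deleting a letter would
   give a shorter word), so this parity par(v, H) is exactly "H separates 1 and v".
   It is a cocycle, par(v x, H) = par(v, H) + par(x, v^-1 H v) mod 2, and writing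
   w w' = (v x)(u u') with x = u v' u^-1 the identity becomes
   a + b = 2 (a && b) + (a xor b) for a = par(v, H), b = par(x, v^-1 H v). *)

Fixpoint alt_word (G : group) (s t : G) (m : nat) : seq G :=
  if m is m'.+1 then s :: t :: alt_word s t m' else [::].

Lemma gprod_alt (G : group) (s t : G) m : gprod (alt_word s t m) = gexp (gmul s t) m.
Proof. by elim: m => //= m ->; rewrite gmulA. Qed.

Section Groups.
Variable G : group.
Local Notation "x ** y" := (@gmul G x y) (at level 40, left associativity).
Local Notation "1" := (@gone G).

Lemma mulKg (x y : G) : ginv x ** (x ** y) = y.
Proof. by rewrite gmulA gmulVg gmul1g. Qed.

Lemma mulgK (x y : G) : y ** x ** ginv x = y.
Proof. by rewrite -gmulA gmulgV gmulg1. Qed.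

Lemma mulgKV (x y : G) : y ** ginv x ** x = y.
Proof. by rewrite -gmulA gmulVg gmulg1. Qed.

Lemma mulgI (x y z : G) : x ** y = x ** z -> y = z.
Proof. by move=> e; rewrite -(mulKg x y) e mulKg. Qed.

Lemma mulIg (x y z : G) : y ** x = z ** x -> y = z.
Proof. by move=> e; rewrite -(mulgK x y) e mulgK. Qed.

Lemma ginv_unique (x y : G) : x ** y = 1 -> ginv x = y.
Proof. by move=> e; apply: (@mulgI x); rewrite gmulgV e. Qed.

Lemma ginvK (x : G) : ginv (ginv x) = x.
Proof. by apply: ginv_unique; rewrite gmulVg. Qed.

Lemma ginv1 : ginv 1 = 1 :> G.
Proof. by apply: ginv_unique; rewrite gmul1g. Qed.

Lemma ginvM (x y : G) : ginv (x ** y) = ginv y ** ginv x.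
Proof. by apply: ginv_unique; rewrite gmulA mulgK gmulgV. Qed.

Lemma gconjM (a b h : G) : gconj (a ** b) h = gconj a (gconj b h).
Proof. by rewrite /gconj ginvM !gmulA. Qed.

Lemma gconj1g (h : G) : gconj 1 h = h.
Proof. by rewrite /gconj ginv1 gmul1g gmulg1. Qed.

Lemma gconjK (a h : G) : gconj (ginv a) (gconj a h) = h.
Proof. by rewrite -gconjM gmulVg gconj1g. Qed.

Lemma gconjVK (a h : G) : gconj a (gconj (ginv a) h) = h.
Proof. by rewrite -gconjM gmulgV gconj1g. Qed.

Lemma gconj_eq (a t r : G) : gconj a t = r <-> t = gconj (ginv a) r.
Proof. by split=> [<-|->]; rewrite ?gconjK ?gconjVK. Qed.

Lemma gconjMr (a x y : G) : gconj a (x ** y) = gconj a x ** gconj a y.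
Proof. by rewrite /gconj !gmulA mulgKV. Qed.

Lemma gconjg1 (a : G) : gconj a 1 = 1.
Proof. by rewrite /gconj gmulg1 gmulgV. Qed.

Lemma gmul_gconj (v u v' u' : G) : v ** u ** (v' ** u') = v ** gconj u v' ** (u ** u').
Proof. by rewrite /gconj !gmulA mulgKV. Qed.

Lemma gprod_cat (l1 l2 : seq G) : gprod (l1 ++ l2) = gprod l1 ** gprod l2.
Proof. by elim: l1 => [|s l IH] /=; rewrite ?gmul1g // IH gmulA. Qed.

Lemma gprod_map_conj (u : G) (l : seq G) : gprod (map (gconj u) l) = gconj u (gprod l).
Proof. by elim: l => [|s l IH] /=; rewrite ?gconjg1 // IH gconjMr. Qed.

Lemma gexpSr (x : G) n : gexp x n.+1 = gexp x n ** x.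
Proof.
elim: n => [|n IH]; first by rewrite /gexp /= gmulg1 gmul1g.
by rewrite -[LHS]/(x ** gexp x n.+1) [in LHS]IH gmulA.
Qed.

Lemma gexpD (x : G) m n : gexp x (m + n) = gexp x m ** gexp x n.
Proof. by elim: m => [|m IH] /=; rewrite ?gmul1g // IH gmulA. Qed.

End Groups.

Section Reflections.
Variable G : group.
Local Notation "x ** y" := (@gmul G x y) (at level 40, left associativity).
Local Notation "1" := (@gone G).

Definition tits_mul (a b : G * (G -> bool)) : G * (G -> bool) :=
  (a.1 ** b.1, fun r => a.2 r (+) b.2 (gconj (ginv a.1) r)).
Definition tits_one : G * (G -> bool) := (1, fun _ => false).
Definition tits_inv (a : G * (G -> bool)) : G * (G -> bool) :=
  (ginv a.1, fun r => a.2 (gconj a.1 r)).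

Lemma tits_mulA x y z : tits_mul x (tits_mul y z) = tits_mul (tits_mul x y) z.
Proof.
case: x y z => [g p] [h q] [k c]; congr pair; first exact: gmulA.
by apply: funext => r /=; rewrite ginvM gconjM addbA.
Qed.

Lemma tits_mul1 x : tits_mul tits_one x = x.
Proof.
case: x => g p; congr pair; first exact: gmul1g.
by apply: funext => r /=; rewrite ginv1 gconj1g.
Qed.

Lemma tits_mulg1 x : tits_mul x tits_one = x.
Proof.
case: x => g p; congr pair; first exact: gmulg1.
by apply: funext => r /=; rewrite addbF.
Qed.

Lemma tits_mulVg x : tits_mul (tits_inv x) x = tits_one.
Proof.
case: x => g p; congr pair; first exact: gmulVg.
by apply: funext => r /=; rewrite ginvK addbb.
Qed.

Lemma tits_mulgV x : tits_mul x (tits_inv x) = tits_one.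
Proof.
case: x => g p; congr pair; first exact: gmulgV.
by apply: funext => r /=; rewrite gconjVK addbb.
Qed.

Definition tits_group : group :=
  {| gmulA := tits_mulA; gmul1g := tits_mul1; gmulg1 := tits_mulg1;
     gmulVg := tits_mulVg; gmulgV := tits_mulgV |}.

Definition tits_gen (s : G) : tits_group := (s, fun r => `[< s = r >]).

Fixpoint reflseq (l : seq G) : seq G :=
  if l is s :: l' then s :: map (gconj s) (reflseq l') else [::].

Lemma size_reflseq l : size (reflseq l) = size l.
Proof. by elim: l => //= s l IH; rewrite size_map IH. Qed.

Lemma nth_reflseq l i : i < size l ->
  nth 1 (reflseq l) i = gconj (gprod (take i l)) (nth 1 l i).
Proof.
elim: l i => [|s l IH] [|i] //= lt_i; first by rewrite gconj1g.
by rewrite (nth_map 1) ?size_reflseq // IH // gconjM.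
Qed.

Lemma reflseq_mul_gprod l i : i < size l -> nth 1 l i ** nth 1 l i = 1 ->
  nth 1 (reflseq l) i ** gprod l = gprod (take i l ++ drop i.+1 l).
Proof.
move=> lt_i xx; rewrite nth_reflseq // gprod_cat.
have -> : gprod l = gprod (take i l) ** (nth 1 l i ** gprod (drop i.+1 l)).
  by rewrite -{1}(cat_take_drop i l) (drop_nth 1 lt_i) gprod_cat.
by rewrite /gconj !gmulA mulgKV -[_ ** nth 1 l i ** nth 1 l i]gmulA xx gmulg1.
Qed.

Lemma reflseq_map_conj (u : G) (l : seq G) :
  reflseq (map (gconj u) l) = map (gconj u) (reflseq l).
Proof.
elim: l => //= s l ->; rewrite -!map_comp; congr cons; apply: eq_map => t /=.
by rewrite -[gconj u s]/(u ** s ** ginv u) !gconjM gconjK.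
Qed.

Definition eqp (r : G) : pred G := fun t => `[< t = r >].

Definition refl_parity (l : seq G) (r : G) : bool := odd (count (eqp r) (reflseq l)).

Lemma count_map_conj (g r : G) (X : seq G) :
  count (eqp r) (map (gconj g) X) = count (eqp (gconj (ginv g) r)) X.
Proof.
rewrite count_map; apply: eq_count => t.
by apply: asbool_equiv_eq; apply: gconj_eq.
Qed.

Lemma refl_parity_cons (s : G) (l : seq G) (r : G) :
  refl_parity (s :: l) r = `[< s = r >] (+) refl_parity l (gconj (ginv s) r).
Proof. by rewrite /refl_parity /= count_map_conj oddD oddb. Qed.

Lemma refl_parity_map_conj (u : G) (l : seq G) (r : G) :
  refl_parity (map (gconj u) l) r = refl_parity l (gconj (ginv u) r).
Proof. by rewrite /refl_parity reflseq_map_conj count_map_conj. Qed.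

Lemma gprod_tits_gen (l : seq G) : gprod (map tits_gen l) = (gprod l, refl_parity l).
Proof.
elim: l => [|s l IH] /=; first by congr pair; apply: funext.
by rewrite IH; congr pair; apply: funext => r; rewrite refl_parity_cons.
Qed.

Lemma refl_parity_cat (l1 l2 : seq G) r :
  refl_parity (l1 ++ l2) r = refl_parity l1 r (+) refl_parity l2 (gconj (ginv (gprod l1)) r).
Proof.
have := gprod_tits_gen (l1 ++ l2).
by rewrite map_cat (@gprod_cat tits_group) !gprod_tits_gen => /(congr1 (fun p => p.2 r)).
Qed.

Lemma reflseq_alt (s t : G) m : ginv s = s -> ginv t = t ->
  reflseq (alt_word s t m) = map (fun j => gexp (s ** t) j ** s) (iota 0 m.*2).
Proof.
move=> invs invt; elim: m => //= m ->; congr cons; first by rewrite gmul1g.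
congr cons; first by rewrite /gconj invs gmulg1.
rewrite -[in RHS](addn0 2) iotaDl -!map_comp; apply: eq_map => j /=.
by rewrite -[s ** t ** gexp (s ** t) j]/(gexp (s ** t) j.+1) gexpSr /gconj invs invt !gmulA.
Qed.

(* The reflection sequence of (st)^m lists each (st)^j s, j < m, twice. *)
Lemma refl_parity_alt (s t : G) m (r : G) : ginv s = s -> ginv t = t ->
  gexp (s ** t) m = 1 -> refl_parity (alt_word s t m) r = false.
Proof.
move=> invs invt stm; rewrite /refl_parity reflseq_alt // -addnn iotaD map_cat count_cat.
rewrite -[in iota m m](addn0 m) iotaDl -map_comp.
under [in X in (_ + X)%N]eq_map => j do rewrite /= gexpD stm gmul1g.
by rewrite addn0 oddD addbb.
Qed.

Lemma tits_gen_alt (s t : G) m : ginv s = s -> ginv t = t -> gexp (s ** t) m = 1 ->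
  gexp (gmul (tits_gen s) (tits_gen t)) m = gone.
Proof.
move=> invs invt stm; rewrite -gprod_alt.
have -> : alt_word (tits_gen s) (tits_gen t) m = map tits_gen (alt_word s t m).
  by elim: m {stm} => //= m ->.
rewrite gprod_tits_gen gprod_alt stm; congr pair; apply: funext => r.
exact: refl_parity_alt.
Qed.

End Reflections.

Section Words.
Variable G : group.
Variable S : G -> Prop.

Lemma word_in_cons (s : G) l : word_in S (s :: l) <-> S s /\ word_in S l.
Proof.
split=> [h|[hs hl] [|i] lt_i //=]; last exact: hl.
by split=> [|i lt_i]; [apply: (h 0) | apply: (h i.+1)].
Qed.

Lemma word_in_cat (l1 l2 : seq G) : word_in S (l1 ++ l2) <-> word_in S l1 /\ word_in S l2.
Proof.
elim: l1 => [|s l1 IH] /=; first by split=> [|[]].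
by rewrite !word_in_cons IH; tauto.
Qed.

Lemma word_in_take i (l : seq G) : word_in S l -> word_in S (take i l).
Proof.
elim: l i => [|s l IH] [|i] //= /word_in_cons [hs hl].
by apply/word_in_cons; split; last exact: IH.
Qed.

Lemma word_in_drop i (l : seq G) : word_in S l -> word_in S (drop i l).
Proof. by elim: l i => [|s l IH] [|i] //= /word_in_cons [_ /IH]. Qed.

Lemma word_in_map (f : G -> G) (l : seq G) :
  (forall s, S s -> S (f s)) -> word_in S l -> word_in S (map f l).
Proof.
move=> Sf; elim: l => [|s l IH] //= /word_in_cons [hs hl].
by apply/word_in_cons; split; [exact: Sf | exact: IH].
Qed.

End Words.

Section Coxeter.
Variable G : group.
Local Notation "x ** y" := (@gmul G x y) (at level 40, left associativity).
Local Notation "1" := (@gone G).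
Variables Waff S : G -> Prop.
Hypothesis cox : coxeter_system Waff S.

Lemma coxeter_invol (s : G) : S s -> s ** s = 1.
Proof. by case: cox => _ _ invS _ _ /invS []. Qed.

Lemma coxeter_word (y : G) : Waff y -> exists2 l, word_in S l & y = gprod l.
Proof. by case: cox => _ _ _ genS _ /genS [l []]; exists l. Qed.

Lemma coxeter_gprod (l : seq G) : word_in S l -> Waff (gprod l).
Proof.
case: cox => -[W1 WM _] SW _ _ _; elim: l => [|s l IH] //= /word_in_cons [hs hl].
by apply: WM; [exact: SW | exact: IH].
Qed.

Lemma refl_parity_gprod (l1 l2 : seq G) : word_in S l1 -> word_in S l2 ->
  gprod l1 = gprod l2 -> refl_parity l1 = refl_parity l2.
Proof.
have invS s : S s -> ginv s = s by move/coxeter_invol/ginv_unique.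
have sqr s : S s -> gmul (tits_gen s) (tits_gen s) = gone.
  move=> Ss; rewrite -[LHS]gmulg1; apply: (@tits_gen_alt G s s 1); rewrite ?invS //.
  by rewrite /gexp /= gmulg1 coxeter_invol.
have braid s t m : S s -> S t -> gexp (s ** t) m = 1 ->
    gexp (gmul (tits_gen s) (tits_gen t)) m = gone.
  by move=> Ss St; apply: tits_gen_alt; apply: invS.
case: cox => -[W1 WM _] SW _ _ /(_ _ _ sqr braid) [phi [phi_gen phiM]].
have phi1 : phi 1 = gone.
  by apply: (@mulIg _ (phi 1)); rewrite gmul1g -phiM // gmul1g.
have phi_gprod l : word_in S l -> phi (gprod l) = gprod (map (@tits_gen G) l).
  elim: l => [|s l IH] /= => [_ | /word_in_cons [hs hl]]; first exact: phi1.
  by rewrite phiM ?(phi_gen s) ?IH //; [exact: SW | exact: coxeter_gprod].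
by move=> /phi_gprod e1 /phi_gprod e2 e; have := congr1 snd e2; rewrite -e e1 !gprod_tits_gen.
Qed.

Definition parity (y r : G) : bool :=
  `[< exists2 l, word_in S l & gprod l = y /\ refl_parity l r >].

Lemma parity_gprod l r : word_in S l -> parity (gprod l) r = refl_parity l r.
Proof.
move=> Sl; apply/asboolP/idP => [[l' Sl' [e p]] | p]; last by exists l.
by rewrite -(refl_parity_gprod Sl' Sl e).
Qed.

Lemma parity_mul v x r : Waff v -> Waff x ->
  parity (v ** x) r = parity v r (+) parity x (gconj (ginv v) r).
Proof.
move=> /coxeter_word [l1 S1 ->] /coxeter_word [l2 S2 ->].
by rewrite -gprod_cat !parity_gprod ?refl_parity_cat //; apply/word_in_cat.
Qed.

Lemma parity_conj u y r : (forall s, S s -> S (gconj u s)) -> Waff y ->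
  parity (gconj u y) r = parity y (gconj (ginv u) r).
Proof.
move=> Su /coxeter_word [l Sl ->].
by rewrite -gprod_map_conj !parity_gprod ?refl_parity_map_conj //; exact: word_in_map.
Qed.

Lemma reduced_expr_exists y : Waff y -> exists l, reduced_expr S l y.
Proof.
move=> /coxeter_word [l0 Sl0 e0].
have ex_n : exists n, `[< exists2 l, word_in S l & gprod l = y /\ size l = n >].
  by exists (size l0); apply/asboolP; exists l0.
case: (ex_minnP ex_n) => n /asboolP [l Sl [e <-]] min_n.
by exists l; split=> // l' Sl' e'; apply: min_n; apply/asboolP; exists l'.
Qed.

Lemma reduced_expr_behead s l y : reduced_expr S (s :: l) y -> reduced_expr S l (gprod l).
Proof.
case=> /word_in_cons [Ss Sl] <- min_sl; split=> // l' Sl' e.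
by rewrite -ltnS; apply: (min_sl (s :: l')); [apply/word_in_cons | rewrite /= e].
Qed.

Lemma reduced_reflseq_head s l y i : reduced_expr S (s :: l) y -> i < size l ->
  nth 1 (reflseq l) i <> s.
Proof.
case=> /word_in_cons [Ss Sl] e_y min_sl lt_i e_s.
have Sl' : word_in S (take i l ++ drop i.+1 l).
  by apply/word_in_cat; split; [exact: word_in_take | exact: word_in_drop].
have e : gprod (take i l ++ drop i.+1 l) = y.
  by rewrite -e_y -reflseq_mul_gprod ?e_s ?coxeter_invol //; exact: Sl.
by have := min_sl _ Sl' e; rewrite /= size_cat size_take size_drop lt_i; lia.
Qed.

Lemma reduced_count_reflseq l y r : reduced_expr S l y -> count (eqp r) (reflseq l) <= 1.
Proof.
elim: l y r => [|s l IH] y r red_l //=.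
rewrite count_map_conj; have := IH _ (gconj (ginv s) r) (reduced_expr_behead red_l).
case: (pselect (s = r)) => [<- _ | ne_sr]; last by rewrite /eqp asboolF.
rewrite /eqp asboolT // /gconj gmulVg gmul1g ginvK add1n ltnS leqn0 eqn0Ngt -has_count.
apply/(has_nthP 1) => -[i]; rewrite size_reflseq => lt_i /asboolP.
exact: reduced_reflseq_head red_l lt_i.
Qed.

Lemma refl_parity_reduced l y r : reduced_expr S l y ->
  refl_parity l r = has (eqp r) (reflseq l).
Proof.
by move=> /(reduced_count_reflseq r); rewrite /refl_parity has_count; case: count => [|[]].
Qed.

Lemma sep1_parity y r : Waff y -> sep1 S y r <-> parity y r.
Proof.
move=> Wy; split.
  case=> l [red_l [i lt_i ->]]; have [Sl <- _] := red_l.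
  rewrite parity_gprod // (refl_parity_reduced _ red_l); apply/(has_nthP 1).
  by exists i; rewrite ?size_reflseq // nth_reflseq //; apply/asboolP.
have [l red_l] := reduced_expr_exists Wy; have [Sl e _] := red_l.
rewrite -e parity_gprod // (refl_parity_reduced _ red_l) => /(has_nthP 1) [i].
rewrite size_reflseq => lt_i /asboolP e_r.
by exists l; split; [rewrite e | exists i => //; rewrite -nth_reflseq].
Qed.

End Coxeter.

Section Extended.
Variable G : group.
Local Notation "x ** y" := (@gmul G x y) (at level 40, left associativity).
Local Notation "1" := (@gone G).
Variables Waff S Omega : G -> Prop.
Hypothesis ext : extended_coxeter Waff S Omega.

Lemma extended_decomp_unique v1 u1 v2 u2 : Waff v1 -> Waff v2 -> Omega u1 -> Omega u2 ->
  v1 ** u1 = v2 ** u2 -> v1 = v2.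
Proof.
have [[[_ WM WV] _ _ _ _] [[_ OM OV] _ _ _ meet1]] := ext.
move=> Wv1 Wv2 Ou1 Ou2 e.
have e' : ginv v2 ** v1 = u2 ** ginv u1 by rewrite -(mulgK u1 v1) e -!gmulA mulKg.
apply: (@mulgI _ (ginv v2)); rewrite gmulVg; apply: meet1.
  by apply: WM => //; apply: WV.
by rewrite e'; apply: OM => //; apply: OV.
Qed.

Lemma asbool_sepW va ua vb ub r : Waff va -> Omega ua -> Waff vb -> Omega ub ->
  `[< sepW Waff S Omega (va ** ua) (vb ** ub) r >]
  = parity S (ginv va ** vb) (gconj (ginv va) r).
Proof.
have [cox _] := ext; have [[_ WM WV] _ _ _ _] := cox.
move=> Wva Oua Wvb Oub; apply: (asbool_equiv_eqP idP); rewrite -(sep1_parity cox); last first.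
  by apply: WM => //; apply: WV.
split=> [[v1 [u1 [v2 [u2 [[Wv1 Ou1 e1] [[Wv2 Ou2 e2] sep]]]]]] | sep].
  rewrite (extended_decomp_unique Wva Wv1 Oua Ou1 e1).
  by rewrite (extended_decomp_unique Wvb Wv2 Oub Ou2 e2).
by exists va, ua, vb, ub.
Qed.

Lemma asbool_sepW1 v u r : Waff v -> Omega u ->
  `[< sepW Waff S Omega 1 (v ** u) r >] = parity S v r.
Proof.
have [[[W1 _ _] _ _ _ _] [[O1 _ _] _ _ _ _]] := ext.
by move=> Wv Ou; rewrite -[1]gmulg1 asbool_sepW // ginv1 gmul1g gconj1g.
Qed.

End Extended.

Lemma addn_andb_addb (a b : bool) : (a + b = (a && b) + (a && b) + (a (+) b))%N.
Proof. by case: a; case: b. Qed.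

Theorem lemma2p7p10 (G : group) (Waff S Omega : G -> Prop)
  (hW : extended_coxeter Waff S Omega) (w w' : G) :
  fcm_mul (Lmon Waff S Omega w) (fcm_act w (Lmon Waff S Omega w'))
  = fcm_mul (fcm_mul (Xmon Waff S Omega w w') (Xmon Waff S Omega w w'))
            (Lmon Waff S Omega (gmul w w')).
Proof.
have [cox [[_ OM _] conjW conjS decomp _]] := hW; have [[_ WM _] _ _ _ _] := cox.
have [v [u [Wv Ou ->]]] := decomp w; have [v' [u' [Wv' Ou' ->]]] := decomp w'.
have Wx : Waff (gconj u v') := conjW u v' Ou Wv'.
apply: funext => r; rewrite /fcm_mul /fcm_act /Lmon /Xmon asbool_and gmul_gconj.
rewrite !asbool_sepW1 ?asbool_sepW ?mulKg //; try by [apply: WM | apply: OM].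
rewrite (parity_mul cox _ Wv Wx) ginvM gconjM -(parity_conj cox) //.
  exact: addn_andb_addb.
by move=> s; apply: conjS.
Qed.
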